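(* Let $X$ be a finite set and $A\subseteq X$ with $|A|$ even. \begin{enumerate} \item Let $(p_B)_{B\subseteq X}$ be nonnegative reals summing to $1$, $\tilde p_B=(p_B+p_{X\setminus B})/2$, $s_C=\sum_{B\in\mathcal{S}_C}p_B$ with $\mathcal{S}_C=\{B\subseteq X: C\cap B\neq\emptyset,\ C\cap(X\setminus B)\neq\emptyset\}$, and $\gamma_A=\sum_{B\subseteq X:\,|A\cap B|\text{ odd}}\tilde p_B$. Then \[ \gamma_A=\frac14\sum_{\substack{B\subseteq A\\|B|\text{ even}}}2^{|B|}\,\mathbb{E}_{|A|-|B|}\,s_B . \] \item Let $T$ be a phylogenetic tree with leaf set $X$ and nonnegative branch lengths, $\tilde w_B=w_{B|X\setminus B}/2$ where $w_{B|X\setminus B}$ is the length of the edge of $T$ whose deletion splits the leaves into $B$ and $X\setminus B$ (or $0$ if there is none), $\delta_C$ the sum of branch lengths of the smallest subtree of $T$ connecting $C$ ($0$ if $|C|\le1$), and $\mu_A=\sum_{B\subseteq X:\,|A\cap B|\text{ odd}}\tilde w_B$. Then \[ \mu_A=\frac14\sum_{\substack{B\subseteq A\\|B|\text{ even}}}2^{|B|}\,\mathbb{E}_{|A|-|B|}\,\delta_B . \] \end{enumerate}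
   Context: The Euler numbers $\mathbb{E}_k$ are defined by $\frac{1}{\cosh(x)}=\frac{2}{e^x+e^{-x}}=\sum_{k=0}^\infty \mathbb{E}_k\frac{x^k}{k!}$. $p_B$ is the probability that at a bi-allelic site exactly the taxa in $B$ have state $1$, and $s_C$ is the probability that a site is non-constant over $C$. A phylogenetic tree with leaf set $X$ is a tree whose leaves are bijectively labelled by $X$ and whose internal vertices have degree at least $3$. *)

From HB Require Import structures.
From mathcomp Require Import all_boot all_order all_algebra.
Set Implicit Arguments. Unset Strict Implicit. Unset Printing Implicit Defensive.
Import Order.TTheory GRing.Theory Num.Theory.
Local Open Scope ring_scope.

(* 1/cosh x = sum_k E_k x^k/k!.  Multiplying by cosh x = sum_{j even} x^j/j!
   and comparing coefficients of x^n/n! gives, for n >= 1,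
     sum_{k <= n, n-k even} C(n,k) E_k = 0,  and E_0 = 1.
   euler_seq n is the list [E_0; ...; E_n] computed by this recurrence. *)
Fixpoint euler_seq (n : nat) : seq int :=
  match n with
  | 0 => [:: 1]
  | m.+1 => let s := euler_seq m in
      rcons s (- \sum_(k < m.+1 | ~~ odd (m.+1 - k)) ('C(m.+1, k))%:Z * s`_k)
  end.

Definition euler (n : nat) : int := (euler_seq n)`_n.

Section Part1.
Variables (R : realFieldType) (X : finType) (p : {set X} -> R).

Definition ptilde (B : {set X}) : R := (p B + p (~: B)) / 2.

Definition Sset (C : {set X}) : {set {set X}} :=
  [set B : {set X} | (C :&: B != set0) && (C :&: ~: B != set0)].

Definition sC (C : {set X}) : R := \sum_(B in Sset C) p B.

Definition gammaA (A : {set X}) : R :=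
  \sum_(B : {set X} | odd #|A :&: B|) ptilde B.
End Part1.

Section Trees.
Variables (V : finType) (adj : rel V).

Definition acyclic : Prop :=
  forall (v0 : V) (q : seq V),
    uniq (v0 :: q) -> (2 <= size q)%N -> path adj v0 q -> ~~ adj (last v0 q) v0.

Definition is_tree : Prop :=
  symmetric adj /\ irreflexive adj /\ (forall u v, connect adj u v) /\ acyclic.

Definition degree (v : V) : nat := #|[set u | adj v u]|.

(* a leaf is a vertex of degree <= 1 (degree 0 only for the one-vertex tree) *)
Definition is_leaf (v : V) : bool := (degree v <= 1)%N.

Variable (X : finType) (phi : X -> V).

Definition phylo_tree : Prop :=
  is_tree /\ injective phi /\ (forall v, is_leaf v <-> exists x, phi x = v)
  /\ (forall v, ~~ is_leaf v -> (3 <= degree v)%N).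

Definition edges : {set {set V}} :=
  [set e : {set V} | [exists u, exists v, adj u v && (e == [set u; v])]].

Definition adj_del (e : {set V}) : rel V :=
  fun x y => adj x y && ([set x; y] != e).

(* one side of the split induced by deleting edge e: the leaves still
   connected to a chosen endpoint of e *)
Definition split_side (e : {set V}) : {set X} :=
  match [pick u in e] with
  | Some u => [set x | connect (adj_del e) (phi x) u]
  | None => set0
  end.

Variables (R : realFieldType) (w : {set V} -> R).

(* w_{B|X\B}: length of the edge inducing split B|X\B, 0 if there is none
   (there is at most one such edge in a phylogenetic tree) *)
Definition w_split (B : {set X}) : R :=
  \sum_(e in edges | (split_side e == B) || (split_side e == ~: B)) w e.

Definition wtilde (B : {set X}) : R := w_split B / 2.

Definition muA (A : {set X}) : R :=
  \sum_(B : {set X} | odd #|A :&: B|) wtilde B.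

Definition spans (C : {set X}) (S : {set V}) : bool :=
  (phi @: C \subset S) &&
  [forall x in S, forall y in S,
     connect (fun a b => [&& adj a b, a \in S & b \in S]) x y].

Definition min_subtree (C : {set X}) : {set V} :=
  [arg min_(S < setT | spans C S) #|S|].

Definition deltaC (C : {set X}) : R :=
  if (#|C| <= 1)%N then 0
  else \sum_(e in edges | e \subset min_subtree C) w e.
End Trees.

(* Both sides are linear in the data: gamma_A = sum_B p_B [|A n B| odd] and
   s_C = sum_B p_B [C splits B]; in a tree mu_A = sum_e w_e [|A n X_e| odd] and
   delta_C = sum_e w_e [C splits X_e], where X_e is one side of the split of the
   edge e, because e lies on the smallest subtree connecting C iff C has leaves on
   both sides of e.  So it suffices that, for |A| = N even and any set S,
     sum_(B <= A, |B| even) 2^|B| E_(N-|B|) [B splits S] = 4 [|A n S| odd].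
   By inclusion-exclusion the left side is H(N) - H(N-a) - H(a) + H(0), where
   a = |A n S| and H(m) = sum_k C(m,k) [k even] 2^k E_(N-k), and
   H(N-a) + H(a) = 2 (-1)^a is the coefficient of x^a t^N/N! in
     sech((1+x)t) (cosh 2t + cosh 2xt) = 2 cosh((1-x)t),
   a consequence of 2 cosh u cosh v = cosh(u+v) + cosh(u-v). *)

From HB Require Import structures.
From mathcomp Require Import all_boot all_order all_algebra ring.
Import Order.TTheory GRing.Theory Num.Theory.

Set Implicit Arguments.
Unset Strict Implicit.
Unset Printing Implicit Defensive.
Local Open Scope ring_scope.

Lemma size_euler_seq n : size (euler_seq n) = n.+1.
Proof. by elim: n => //= n IH; rewrite size_rcons IH. Qed.

Lemma nth_euler_seq n j : (euler_seq (n + j))`_n = euler n.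
Proof.
elim: j => [|j IH]; first by rewrite addn0.
by rewrite addnS /= nth_rcons size_euler_seq ltnS leq_addr IH.
Qed.

Lemma euler_recurrence m :
  \sum_(k < m.+1) 'C(m, k)%:Z * (~~ odd (m - k))%:Z * euler k = (m == 0%N)%:Z.
Proof.
case: m => [|m]; first by rewrite big_ord1.
rewrite big_ord_recr /= subnn binn /= mul1r.
rewrite {2}/euler /= nth_rcons size_euler_seq ltnn eqxx.
rewrite [X in _ - X]big_mkcond /= -sumrB; apply: big1 => i _.
rewrite -(nth_euler_seq i (m - i)) subnKC; last by rewrite -ltnS.
by case: (~~ odd _); rewrite ?mulr1 ?mulr0 ?mul0r subrr.
Qed.

Lemma bin_mul_bin n i j : ('C(n, i) * 'C(n - i, j) = 'C(n, i + j) * 'C(i + j, i))%N.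
Proof.
have [hij|hij] := leqP (i + j) n; last first.
  have [hi|hi] := leqP i n; last by rewrite (bin_small hi) (bin_small hij).
  by rewrite (bin_small hij) (@bin_small (n - i) j) ?muln0 // ltn_subLR.
have hi : (i <= n)%N by apply: leq_trans hij; rewrite leq_addr.
have hj : (j <= n - i)%N by rewrite leq_subRL.
apply/eqP; rewrite -(@eqn_pmul2r (i`! * j`! * (n - (i + j))`!)); last first.
  by rewrite !muln_gt0 !fact_gt0.
have e1 := bin_fact hj; rewrite -subnDA in e1.
have e2 := bin_fact hi; have e3 := bin_fact hij.
have e4 := bin_fact (leq_addr j i); rewrite addKn in e4.
apply/eqP; transitivity n`!.
  rewrite -e2 -e1.
  by move: 'C(n, i) 'C(n - i, j) i`! j`! (n - (i + j))`! => a b c d f; ring.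
rewrite -e3 -e4.
by move: 'C(n, i + j) 'C(i + j, i) i`! j`! (n - (i + j))`! => a b c d f; ring.
Qed.

Section BinomialConvolution.
Variable R : comNzRingType.
Implicit Types f g h : nat -> R.

Definition binconv f g n : R := \sum_(i < n.+1) f i * g (n - i)%N *+ 'C(n, i).

Lemma eq_binconvr f g g' n : (forall m, g m = g' m) -> binconv f g n = binconv f g' n.
Proof. by move=> gg'; apply: eq_bigr => i _; rewrite gg'. Qed.

Lemma binconvC f g n : binconv f g n = binconv g f n.
Proof.
rewrite /binconv (reindex_inj rev_ord_inj); apply: eq_bigr => i _ /=.
have hi : (i <= n)%N by rewrite -ltnS.
by rewrite subSS subKn // bin_sub // mulrC.
Qed.

Lemma binconv1l f n : binconv (fun k => (k == 0%N)%:R) f n = f n.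
Proof.
rewrite /binconv big_ord_recl subn0 bin0 mul1r mulr1n big1 ?addr0 // => i _.
by rewrite mul0r mul0rn.
Qed.

Lemma binconvZr c f g n : binconv f (fun m => c * g m) n = c * binconv f g n.
Proof. by rewrite /binconv mulr_sumr; apply: eq_bigr => i _; rewrite mulrnAr mulrCA. Qed.

Lemma binconvA f g h n : binconv (binconv f g) h n = binconv f (binconv g h) n.
Proof.
pose T j i := f j * g (i - j)%N * h (n - i)%N *+ ('C(n, i) * 'C(i, j)).
have T_small j i : (i < j)%N -> T j i = 0.
  by move=> ij; rewrite /T (bin_small ij) muln0 mulr0n.
transitivity (\sum_(i < n.+1) \sum_(j < n.+1) T j i).
  apply: eq_bigr => i _.
  rewrite -(big_mkord xpredT (T ^~ i)) (@big_cat_nat _ _ _ i.+1) ?ltn_ord //=.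
  rewrite [X in _ = _ + X]big_nat_cond [X in _ = _ + X]big1 ?addr0; last first.
    by move=> j /andP[/andP[ij _] _]; apply: T_small.
  rewrite big_mkord mulr_suml -sumrMnl; apply: eq_bigr => j _.
  by rewrite /T mulrnAl -mulrnA mulnC.
rewrite exchange_big /=; apply: eq_bigr => j _.
have hj : (j <= n)%N by rewrite -ltnS.
rewrite -(big_mkord xpredT (T j)) (@big_cat_nat _ _ _ j) //=; last exact: ltnW.
rewrite big_nat_cond big1 ?add0r; last by move=> i /andP[/andP[_ ij] _]; apply: T_small.
rewrite -{1}(add0n j) big_addn subSn // big_mkord mulr_sumr -sumrMnl.
apply: eq_bigr => k _.
by rewrite /T addnK -subnDA addnC mulrnAr -mulrnA mulrA -bin_mul_bin mulnC.
Qed.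

(* [binconv] multiplies exponential generating functions; [sech_seq a] and
   [cosh_seq a] are the coefficients of sech(a t) and cosh(a t). *)
Definition sech_seq (a : R) m : R := (euler m)%:~R * a ^+ m.
Definition cosh_seq (a : R) m : R := (~~ odd m)%:R * a ^+ m.

Lemma binconv_sech_cosh a n : binconv (sech_seq a) (cosh_seq a) n = (n == 0%N)%:R.
Proof.
transitivity ((\sum_(k < n.+1) 'C(n, k)%:Z * (~~ odd (n - k))%:Z * euler k)%:~R * a ^+ n).
  rewrite rmorph_sum mulr_suml; apply: eq_bigr => k _.
  have hk : (k <= n)%N by rewrite -ltnS.
  rewrite /sech_seq /cosh_seq !rmorphM /= -mulrzr.
  have -> : a ^+ n = a ^+ k * a ^+ (n - k) by rewrite -exprD subnKC.
  ring.
by rewrite euler_recurrence; case: n => [|n]; rewrite ?mul1r ?mul0r.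
Qed.

Lemma binconv_cosh a b n :
  2 * binconv (cosh_seq a) (cosh_seq b) n = cosh_seq (a + b) n + cosh_seq (a - b) n.
Proof.
rewrite /cosh_seq -mulrDr (addrC a) (addrC a) !exprDn -big_split /binconv !mulr_sumr.
apply: eq_bigr => i _; have hi : (i <= n)%N by rewrite -ltnS.
rewrite exprNn -signr_odd oddB //.
by case: (odd n); case: (odd i) => /=; ring.
Qed.

Lemma binconv_sech_cosh_addsub a b n :
  binconv (sech_seq a) (fun m => cosh_seq (a + b) m + cosh_seq (a - b) m) n =
  2 * cosh_seq b n.
Proof.
rewrite (eq_binconvr _ _ (fun m => esym (binconv_cosh a b m))) binconvZr -binconvA.
by rewrite binconvC (eq_binconvr _ _ (binconv_sech_cosh a)) binconvC binconv1l.
Qed.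
End BinomialConvolution.

Arguments binconv {R}.
Arguments sech_seq {R}.
Arguments cosh_seq {R}.

Lemma bin_mul_bin_swap n k b : ('C(n, k) * 'C(n - k, b) = 'C(n, b) * 'C(n - b, k))%N.
Proof. by rewrite !bin_mul_bin addnC -(bin_sub (leq_addr k b)) addKn. Qed.

Lemma bin_mul_bin_split n k b :
  ('C(n, k) * ('C(n - k, b) + (if b < k then 0 else 'C(n - k, b - k)))
   = 'C(n, b) * ('C(n - b, k) + 'C(b, k)))%N.
Proof.
rewrite !mulnDr bin_mul_bin_swap; congr (_ + _).
case: ltnP => [bk|kb]; first by rewrite (bin_small bk) !muln0.
by rewrite bin_mul_bin subnKC.
Qed.

Lemma coef_scaleX_add1_exp (R : nzRingType) (c : R) n j :
  ((c *: 'X + 1) ^+ n)`_j = c ^+ j * 'C(n, j)%:R.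
Proof.
elim: n j => [|n IH] j; first by rewrite expr0 coef1 bin0n; case: j => [|j]; rewrite ?mulr1 ?mulr0.
rewrite exprS mulrDl mul1r -scalerAl coefD coefZ coefXM.
case: j => [|j] /=; first by rewrite mulr0 add0r IH !bin0 expr0.
by rewrite !IH binS natrD exprS mulrDr addrC !mulrA.
Qed.

Section EulerBinomialSums.
Variable R : numDomainType.

Definition euler_weight (N k : nat) : R := (~~ odd k)%:R * 2 ^+ k * (euler (N - k))%:~R.

Definition euler_binsum (N a : nat) : R := \sum_(k < N.+1) 'C(a, k)%:R * euler_weight N k.

Lemma euler_binsum_complement N b : (b <= N)%N -> ~~ odd N ->
  euler_binsum N (N - b) + euler_binsum N b = 2 * (-1) ^+ b.
Proof.
move=> bN evenN.
pose a : {poly R} := 1 *: 'X + 1; pose a' : {poly R} := (-1) *: 'X + 1.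
have binN : 'C(N, b)%:R != 0 :> R by rewrite pnatr_eq0 -lt0n bin_gt0.
apply: (mulfI binN).
have summand k : (cosh_seq (a + a') k + cosh_seq (a - a') k) * sech_seq a (N - k) =
              (euler_weight N k)%:P * ((1 + 'X^k) * a ^+ (N - k)).
  have -> : a + a' = 2%:P by rewrite /a /a' scale1r scaleN1r polyC_natr; ring.
  have -> : a - a' = 2%:P * 'X by rewrite /a /a' scale1r scaleN1r polyC_natr; ring.
  rewrite /cosh_seq /sech_seq /euler_weight exprMn -!polyC_exp !polyCM polyC_natr.
  rewrite -[((euler _)%:~R)%:P]/(((euler _)%:~R : R)%:P) rmorph_int.
  ring.
have := congr1 (coefp b) (@binconv_sech_cosh_addsub _ a a' N).
rewrite binconvC /binconv !linear_sum /=.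
under eq_bigr do rewrite summand.
rewrite /cosh_seq evenN mul1r mulr_natl coefMn coef_scaleX_add1_exp => E.
rewrite [RHS](_ : _ = (-1) ^+ b * 'C(N, b)%:R *+ 2); last by rewrite -mulr_natl; ring.
rewrite -E.
rewrite /euler_binsum -big_split mulr_sumr /=; apply: eq_bigr => k _.
rewrite coefMn coefCM mulrDl mul1r coefD coefXnM !coef_scaleX_add1_exp expr1n.
have := congr1 (GRing.natmul (1 : R)) (bin_mul_bin_split N k b).
rewrite !natrM !natrD => bin_split.
rewrite -mulrDl mulrA -bin_split -mulr_natl expr1n.
by case: ltnP => _ /=; rewrite ?mul1r; ring.
Qed.
End EulerBinomialSums.

Arguments euler_weight {R}.
Arguments euler_binsum {R}.

Definition splits {X : finType} (C S : {set X}) : bool :=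
  (C :&: S != set0) && (C :&: ~: S != set0).

Section SplitSums.
Variables (R : numDomainType) (X : finType).
Implicit Types (A B D S : {set X}) (P Q : pred {set X}).

Lemma big_mulr_bool P Q (F : {set X} -> R) :
  \sum_(B : {set X} | P B) F B * (Q B)%:R = \sum_(B : {set X} | P B && Q B) F B.
Proof. by rewrite big_mkcondr; apply: eq_bigr => B _; rewrite mulr_natr mulrb. Qed.

Lemma sum_subset_card D (f : nat -> R) m : (#|D| <= m)%N ->
  \sum_(B : {set X} | B \subset D) f #|B| = \sum_(k < m.+1) 'C(#|D|, k)%:R * f k.
Proof.
move=> Dm.
transitivity (\sum_(B : {set X} | B \subset D) \sum_(k < m.+1) f k * (#|B| == k)%:R).
  apply: eq_bigr => B BD.
  have Bm : (#|B| < m.+1)%N by rewrite ltnS (leq_trans (subset_leq_card BD)).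
  rewrite (bigD1 (Ordinal Bm)) //= eqxx mulr1 big1 ?addr0 // => k.
  case: (#|B| =P k) => [Bk kB|_ _]; last by rewrite mulr0.
  by case/eqP: kB; apply: val_inj; rewrite /= Bk.
rewrite exchange_big /=; apply: eq_bigr => k _.
rewrite -mulr_sumr mulrC; congr (_ * _).
rewrite -cards_draws -sum1_card natr_sum big_mkcond [RHS]big_mkcond /=.
by apply: eq_bigr => B _; rewrite inE; case: (_ \subset _); case: (_ == _).
Qed.

Lemma splits_indicator B S :
  (splits B S)%:R =
  (B \subset setT)%:R - (B \subset ~: S)%:R - (B \subset S)%:R + (B \subset set0)%:R :> R.
Proof.
rewrite /splits !setI_eq0 !disjoints_subset setCK subsetT.
have -> : (B \subset set0) = (B \subset ~: S) && (B \subset S).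
  by rewrite -subsetI setIC setICr.
by case: (B \subset ~: S); case: (B \subset S) => /=; ring.
Qed.

Lemma euler_sum_splits A S : ~~ odd #|A| ->
  \sum_(B : {set X} | (B \subset A) && ~~ odd #|B|)
     2 ^+ #|B| * (euler (#|A| - #|B|))%:~R * (splits B S)%:R
  = 4 * (odd #|A :&: S|)%:R :> R.
Proof.
move=> evenA.
have sum_below (T : {set X}) : \sum_(B : {set X} | (B \subset A) && ~~ odd #|B|)
      2 ^+ #|B| * (euler (#|A| - #|B|))%:~R * (B \subset T)%:R = euler_binsum #|A| #|A :&: T| :> R.
  rewrite big_mulr_bool.
  rewrite (eq_bigl (fun B => (B \subset A :&: T) && ~~ odd #|B|)); last first.
    by move=> B; rewrite subsetI andbAC.
  rewrite -big_mulr_bool /euler_binsum -(@sum_subset_card _ (euler_weight #|A|)); last first.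
    by rewrite subset_leq_card ?subsetIl.
  by apply: eq_bigr => B _; rewrite /euler_weight; ring.
under eq_bigr do rewrite splits_indicator !mulrDr !mulrN.
rewrite !big_split !sumrN /= !sum_below setIT setI0 cards0.
have cardAS : #|A :&: ~: S| = (#|A| - #|A :&: S|)%N by rewrite -(cardsID S A) setDE addKn.
have E0 := @euler_binsum_complement R #|A| 0 (leq0n _) evenA.
have := @euler_binsum_complement R #|A| #|A :&: S| (subset_leq_card (subsetIl _ _)) evenA.
rewrite subn0 in E0; rewrite cardAS -signr_odd => Ea.
have -> (x y z t : R) : x - y - z + t = (x + t) - (y + z) by ring.
by rewrite E0 Ea; case: (odd _); rewrite /=; ring.
Qed.

Lemma euler_sum_splits_weighted (I : finType) (P : pred I) (c : I -> R)
    (S : I -> {set X}) A : ~~ odd #|A| ->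
  \sum_(B : {set X} | (B \subset A) && ~~ odd #|B|)
     2 ^+ #|B| * (euler (#|A| - #|B|))%:~R * (\sum_(i | P i) c i * (splits B (S i))%:R)
  = 4 * \sum_(i | P i) c i * (odd #|A :&: S i|)%:R.
Proof.
move=> evenA; under eq_bigr do rewrite mulr_sumr.
rewrite exchange_big mulr_sumr; apply: eq_bigr => i _.
rewrite mulrCA -euler_sum_splits // mulr_sumr; apply: eq_bigr => B _; ring.
Qed.

Lemma splits_card B S : splits B S -> (1 < #|B|)%N.
Proof.
case/andP => /set0Pn[x /setIP[xB xS]] /set0Pn[y /setIP[yB yS]].
have xy : x != y by apply: contraTneq yS => <-; rewrite inE xS.
have xyB : [set x; y] \subset B by rewrite subUset !sub1set xB yB.
by move: (subset_leq_card xyB); rewrite cards2 xy.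
Qed.

Lemma odd_setIC A B : ~~ odd #|A| -> odd #|A :&: ~: B| = odd #|A :&: B|.
Proof. by rewrite -(cardsID B A) setDE oddD; case: odd; case: odd. Qed.

Lemma sum_indicator_eq P S : \sum_(B : {set X} | P B) (B == S)%:R = (P S)%:R :> R.
Proof.
rewrite big_mkcond (bigD1 S) //= eqxx big1 ?addr0 => [|B /negbTE ->]; first by case: (P S).
by case: (P B).
Qed.

Lemma sum_odd_setC_pair A S : ~~ odd #|A| ->
  \sum_(B : {set X} | odd #|A :&: B|) ((S == B) || (S == ~: B))%:R
  = 2 * (odd #|A :&: S|)%:R :> R.
Proof.
move=> evenA; have [S_selfC|S_notC] := eqVneq S (~: S).
  have A0 B : A :&: B = set0.
    by apply/setP => x; move/setP/(_ x): S_selfC; rewrite !inE; case: (x \in S).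
  by rewrite A0 cards0 mulr0 big_pred0 // => B; rewrite A0 cards0.
under eq_bigr => B _ do rewrite [S == B]eq_sym [S == ~: B]eq_sym (can2_eq setCK setCK).
rewrite (eq_bigr (fun B => (B == S)%:R + (B == ~: S)%:R)) => [|B _]; last first.
  by case: eqP => [-> | _]; rewrite ?(negbTE S_notC) ?add0r ?addr0.
by rewrite big_split !sum_indicator_eq odd_setIC //= mulr2n mulrDl mul1r.
Qed.

End SplitSums.

Section SitePatterns.
Variables (R : realFieldType) (X : finType) (p : {set X} -> R).

Lemma gammaA_odd (A : {set X}) : ~~ odd #|A| ->
  gammaA p A = \sum_(B : {set X}) p B * (odd #|A :&: B|)%:R.
Proof.
move=> evenA; rewrite /gammaA /ptilde -mulr_suml big_split /=.
rewrite [X in _ + X](reindex_inj (@setC_inj X)) /=.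
under [X in _ + X]eq_bigl do rewrite odd_setIC //.
under [X in _ + X]eq_bigr do rewrite setCK.
by rewrite mulrDl -splitr big_mulr_bool.
Qed.

Lemma sC_splits (C : {set X}) : sC p C = \sum_(B : {set X}) p B * (splits C B)%:R.
Proof. by rewrite big_mulr_bool; apply: eq_bigl => B; rewrite inE. Qed.

End SitePatterns.

Section EdgeDeletion.
Variables (V : finType) (adj : rel V).
Hypotheses (adj_sym : symmetric adj) (adj_irr : irreflexive adj).
Hypotheses (adj_conn : forall u v, connect adj u v) (adj_acyclic : acyclic adj).
Variables (p q : V).
Hypothesis pq_adj : adj p q.

Local Notation e := [set p; q].
Local Notation cut := (connect (adj_del adj e)).

Lemma adj_del_sym : symmetric (adj_del adj e).
Proof. by move=> a b; rewrite /adj_del adj_sym setUC. Qed.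

Lemma cut_sym a b : cut a b = cut b a.
Proof. exact: (sym_connect_sym adj_del_sym). Qed.

Lemma cut_same_side a b : cut a b -> cut a p = cut b p.
Proof. by move=> ab; apply: (same_connect (sym_connect_sym adj_del_sym) ab). Qed.

(* A path from p to q avoiding the edge pq would close a cycle with it. *)
Lemma cut_separates : ~~ cut p q.
Proof.
apply/negP => /connectP [s s_path s_last].
case/shortenP: s_path s_last => s' s'_path s'_uniq _ s'_last.
case: s' s'_path s'_uniq s'_last => [|y [|z t]] s'_path s'_uniq /= s'_last.
- by move: pq_adj; rewrite -s'_last adj_irr.
- by move: s'_path; rewrite /= -s'_last /adj_del eqxx !andbF.
- have del_sub : subrel (adj_del adj e) adj by move=> a b /andP[].
  have := @adj_acyclic p _ s'_uniq isT (sub_path del_sub s'_path).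
  by rewrite /= -s'_last adj_sym pq_adj.
Qed.

Lemma cut_cover z : cut z p || cut z q.
Proof.
have /connectP [s s_path s_last] := adj_conn z p.
elim: s z s_path s_last => [|y s IH] z /=; first by move=> _ ->; rewrite connect0.
case/andP => zy s_path s_last.
have [zy_e|zy_e] := eqVneq [set z; y] e.
  have : z \in e by rewrite -zy_e !inE eqxx.
  by rewrite !inE => /orP[] /eqP ->; rewrite connect0 ?orbT.
have zy_cut : cut z y by apply: connect1; rewrite /adj_del zy zy_e.
by case/orP: (IH y s_path s_last) => h; rewrite (connect_trans zy_cut h) ?orbT.
Qed.

Lemma cut_cross a b : adj a b -> cut a p != cut b p -> [set a; b] = e.
Proof.
move=> ab; apply: contraNeq => ab_e; apply/eqP; apply: cut_same_side.
by apply: connect1; rewrite /adj_del ab ab_e.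
Qed.

Lemma cut_endpoint a b : [set a; b] = e -> cut a p -> a = p.
Proof.
move=> ab_e ap; have : a \in e by rewrite -ab_e !inE eqxx.
rewrite !inE => /orP[/eqP // | /eqP aq].
by move: ap; rewrite aq cut_sym (negbTE cut_separates).
Qed.

Lemma edge_in_set (S : {set V}) a b :
  [set a; b] = e -> a \in S -> b \in S -> (p \in S) && (q \in S).
Proof.
move=> ab_e aS bS; have : p \in e by rewrite !inE eqxx.
have : q \in e by rewrite !inE eqxx orbT.
by rewrite -ab_e !inE => /orP[] /eqP -> /orP[] /eqP ->; rewrite ?aS ?bS.
Qed.

Local Notation inside S := (fun a b => [&& adj a b, a \in S & b \in S]).

Lemma path_inside_leaving_side (S : {set V}) s a :
  path (inside S) a s -> cut a p != cut (last a s) p -> (p \in S) && (q \in S).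
Proof.
elim: s a => [|b s IH] a /=; first by rewrite eqxx.
case/andP => /and3P[ab aS bS] s_path a_last.
have [ab_p|ab_p] := eqVneq (cut a p) (cut b p).
  by apply: IH s_path _; rewrite -ab_p.
exact: edge_in_set (cut_cross ab ab_p) aS bS.
Qed.

Lemma path_into_side (S : {set V}) s a :
  path (inside S) a s -> cut (last a s) p ->
  connect (inside (S :&: [set z | cut z p])) (if cut a p then a else p) (last a s).
Proof.
elim: s a => [|b s IH] a /=; first by move=> _ ->; apply: connect0.
case/andP => /and3P[ab aS bS] s_path last_p; have := IH b s_path last_p.
case: ifP => bp; case: ifP => ap //.
- apply: connect_trans; apply: connect1; by rewrite /= !inE ab aS bS ap bp.
- have ba_e : [set b; a] = e by apply: cut_cross; [rewrite adj_sym | rewrite ap bp].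
  by rewrite (cut_endpoint ba_e bp).
- have ab_e : [set a; b] = e by apply: cut_cross; rewrite ?ap ?bp.
  by rewrite (cut_endpoint ab_e ap).
Qed.

Variables (X : finType) (phi : X -> V).

Lemma spans_separated (B : {set X}) (S : {set V}) x y :
  spans adj phi B S -> x \in B -> y \in B -> cut (phi x) p != cut (phi y) p ->
  (p \in S) && (q \in S).
Proof.
case/andP => /subsetP BS /forallP S_conn xB yB xy.
have xS : phi x \in S by apply/BS/imset_f.
have yS : phi y \in S by apply/BS/imset_f.
have /connectP [s s_path s_last] := implyP (forallP (implyP (S_conn _) xS) _) yS.
by apply: (path_inside_leaving_side s_path); rewrite -s_last.
Qed.

Lemma spans_shrink (B : {set X}) (S : {set V}) :
  spans adj phi B S -> q \in S -> (forall x, x \in B -> cut (phi x) p) ->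
  exists2 S', spans adj phi B S' & (#|S'| < #|S|)%N.
Proof.
case/andP => /subsetP BS /forallP S_conn qS B_p.
exists (S :&: [set z | cut z p]).
  apply/andP; split.
    by apply/subsetP => _ /imsetP[x xB ->]; rewrite !inE BS ?imset_f ?B_p.
  apply/forallP => a; apply/implyP; rewrite !inE => /andP[aS ap].
  apply/forallP => b; apply/implyP; rewrite !inE => /andP[bS bp].
  have /connectP [s s_path s_last] := implyP (forallP (implyP (S_conn _) aS) _) bS.
  by have := path_into_side s_path; rewrite -s_last ap => /(_ bp).
apply: proper_card; rewrite properE subsetIl; apply/subsetPn; exists q => //.
by rewrite !inE cut_sym (negbTE cut_separates) andbF.
Qed.

End EdgeDeletion.

Section MinimalSubtree.
Variables (V : finType) (adj : rel V) (X : finType) (phi : X -> V).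
Hypotheses (adj_sym : symmetric adj) (adj_irr : irreflexive adj).
Hypotheses (adj_conn : forall u v, connect adj u v) (adj_acyclic : acyclic adj).

Lemma min_subtree_spec (B : {set X}) :
  spans adj phi B (min_subtree adj phi B) /\
  forall S, spans adj phi B S -> (#|min_subtree adj phi B| <= #|S|)%N.
Proof.
have spansT : spans adj phi B setT.
  apply/andP; split; first exact: subsetT.
  apply/forallP => a; apply/implyP => _; apply/forallP => b; apply/implyP => _.
  by rewrite (eq_connect (e' := adj)) // => u v; rewrite !inE !andbT.
by rewrite /min_subtree; case: arg_minnP.
Qed.

Lemma edge_in_min_subtree (B : {set X}) p q : adj p q ->
  ([set p; q] \subset min_subtree adj phi B) =
  splits B [set x | connect (adj_del adj [set p; q]) (phi x) p].
Proof.
move=> pq; have [M_spans M_min] := min_subtree_spec B.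
have not_smaller S : spans adj phi B S -> ~ (#|S| < #|min_subtree adj phi B|)%N.
  by move=> S_spans; rewrite ltnNge M_min.
rewrite subUset !sub1set /splits; apply/idP/idP.
- case/andP=> pM qM; apply/andP; split; apply/negP => /eqP B_side.
  + have B_q x : x \in B -> connect (adj_del adj [set q; p]) (phi x) q.
      move=> xB; rewrite setUC; have := cut_cover adj_conn p q (phi x).
      suff -> : connect (adj_del adj [set p; q]) (phi x) p = false by [].
      by apply/negbTE/negP => xp; move/setP/(_ x): B_side; rewrite !inE xB xp.
    have qp : adj q p by rewrite adj_sym.
    have [S S_spans] := spans_shrink adj_sym adj_irr adj_acyclic qp M_spans pM B_q.
    exact: not_smaller S_spans.
  + have B_p x : x \in B -> connect (adj_del adj [set p; q]) (phi x) p.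
      by move=> xB; apply/negPn/negP => xp; move/setP/(_ x): B_side; rewrite !inE xB xp.
    have [S S_spans] := spans_shrink adj_sym adj_irr adj_acyclic pq M_spans qM B_p.
    exact: not_smaller S_spans.
- case/andP => /set0Pn[x /setIP[xB]] /[!inE] xp /set0Pn[y /setIP[yB]] /[!inE] yp.
  by apply: (spans_separated adj_sym M_spans xB yB); rewrite xp (negbTE yp).
Qed.

Lemma edge_in_min_subtree_split (B : {set X}) e : e \in edges adj ->
  (e \subset min_subtree adj phi B) = splits B (split_side adj phi e).
Proof.
rewrite inE => /existsP[u /existsP[v /andP[uv /eqP ->]]].
rewrite /split_side; case: pickP => [w | /(_ u)]; last by rewrite !inE eqxx.
rewrite !inE => /orP[] /eqP ->; first exact: edge_in_min_subtree.
by rewrite setUC; apply: edge_in_min_subtree; rewrite adj_sym.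
Qed.

Lemma deltaC_splits (R : realFieldType) (w : {set V} -> R) (B : {set X}) :
  deltaC adj phi w B = \sum_(e in edges adj) w e * (splits B (split_side adj phi e))%:R.
Proof.
rewrite /deltaC; case: leqP => [B_small | _].
  rewrite big1 // => e _; case: (boolP (splits _ _)) => [/splits_card|]; last by rewrite mulr0.
  by rewrite ltnNge B_small.
rewrite -big_mulr_bool; apply: eq_bigr => e e_edge.
by rewrite edge_in_min_subtree_split.
Qed.

End MinimalSubtree.

Lemma muA_odd (R : realFieldType) (V X : finType) (adj : rel V) (phi : X -> V)
    (w : {set V} -> R) (A : {set X}) : ~~ odd #|A| ->
  muA adj phi w A = \sum_(e in edges adj) w e * (odd #|A :&: split_side adj phi e|)%:R.
Proof.
move=> evenA; rewrite /muA /wtilde /w_split -mulr_suml.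
under eq_bigr do rewrite -big_mulr_bool.
rewrite exchange_big mulr_suml; apply: eq_bigr => e _.
by rewrite -mulr_sumr sum_odd_setC_pair // mulrCA (mulrC 2) mulfK ?pnatr_eq0.
Qed.


Theorem theorem6 :
  (forall (R : realFieldType) (X : finType) (A : {set X}) (p : {set X} -> R),
     ~~ odd #|A| ->
     (forall B, 0 <= p B) -> \sum_(B : {set X}) p B = 1 ->
     gammaA p A =
       4^-1 * \sum_(B : {set X} | (B \subset A) && ~~ odd #|B|)
                2 ^+ #|B| * (euler (#|A| - #|B|))%:~R * sC p B)
  /\
  (forall (R : realFieldType) (X V : finType) (adj : rel V) (phi : X -> V)
          (w : {set V} -> R) (A : {set X}),
     phylo_tree adj phi ->
     (forall e, e \in edges adj -> 0 <= w e) ->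
     ~~ odd #|A| ->
     muA adj phi w A =
       4^-1 * \sum_(B : {set X} | (B \subset A) && ~~ odd #|B|)
                2 ^+ #|B| * (euler (#|A| - #|B|))%:~R * deltaC adj phi w B).
Proof.
split=> [R X A p evenA _ _ | R X V adj phi w A [[sym [irr [conn acyc]]] _] _ evenA].
  under eq_bigr do rewrite sC_splits.
  by rewrite euler_sum_splits_weighted // mulKf ?pnatr_eq0 // gammaA_odd.
under eq_bigr do rewrite deltaC_splits //.
by rewrite euler_sum_splits_weighted // mulKf ?pnatr_eq0 // muA_odd.
Qed.
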